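(* Let $(\mu^{(n)})$ be an almost-Berger sequence with regularity index $\mathrm{reg}(\mu^{(n)})\ge2$. Then for every integer $k\ge1$ there exists a constant $L_k>0$ such that $$|\mathrm{Rm}^k(\mu^{(n)})|_{\rm st}\le L_k\Big((\varepsilon^{(n)})^{1/2}+(\varepsilon^{(n)})^{-\frac{k+2}{2}}|\lambda_1^{(n)}-\lambda_2^{(n)}|\Big)\quad\text{for all }n\in\mathbb N.$$
   Context: Let $X_0=\begin{pmatrix}i&0\\0&-i\end{pmatrix}$, $X_1=\begin{pmatrix}0&-1\\1&0\end{pmatrix}$, $X_2=\begin{pmatrix}0&i\\i&0\end{pmatrix}$, a basis of $\mathfrak{su}(2)$ with $[X_0,X_1]=-2X_2$, $[X_0,X_2]=2X_1$, $[X_1,X_2]=-2X_0$. For $\varepsilon,\lambda_1,\lambda_2>0$ let $g$ be the left-invariant metric on $\mathsf{SU}(2)$ with $X_0,X_1,X_2$ pairwise orthogonal and $g(X_0,X_0)=\varepsilon$, $g(X_1,X_1)=\lambda_1$, $g(X_2,X_2)=\lambda_2$; identify the orthonormal basis $X_0/\sqrt\varepsilon,X_1/\sqrt{\lambda_1},X_2/\sqrt{\lambda_2}$ with the standard basis $(e_0,e_1,e_2)$ of $\mathbb R^3$, and let $\mu$ be the corresponding bracket on $\mathbb R^3$. With curvature convention $\mathrm{Rm}(X\wedge Y)=\nabla_{[X,Y]}-[\nabla_X,\nabla_Y]$, $\mathrm{Rm}^k(\mu):\bigotimes^k\mathbb R^3\otimes\Lambda^2\mathbb R^3\to\mathfrak{so}(3)$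 is the $k$-th covariant derivative of the curvature operator of $g$ at $e$ expressed in this basis, and $|\cdot|_{\rm st}$ is the standard Euclidean norm. An almost-Berger sequence is a sequence $(\mu^{(n)})$ of such brackets, with parameters $(\varepsilon^{(n)},\lambda_1^{(n)},\lambda_2^{(n)})$, such that $\varepsilon^{(n)}\to0$, $\lambda_i^{(n)}\to1$, and $|\lambda_1^{(n)}-\lambda_2^{(n)}|\le C\varepsilon^{(n)}$ for some $C>0$ and all $n$. Its regularity index is $\mathrm{reg}(\mu^{(n)})=\sup\{k\in\mathbb Z:(\varepsilon^{(n)})^{-k/2}|\lambda_1^{(n)}-\lambda_2^{(n)}|\to0\}\in\{1,2,\dots\}\cup\{+\infty\}$. *)

From Stdlib Require Import Reals Lra List ZArith.
Import ListNotations.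
Open Scope R_scope.

Definition sum3 (f : nat -> R) : R := f 0%nat + f 1%nat + f 2%nat.

(* Structure constants of su(2) in the basis X0,X1,X2:
   [X_i, X_j] = sum_k suC i j k X_k, with
   [X0,X1] = -2 X2, [X0,X2] = 2 X1, [X1,X2] = -2 X0. *)
Definition suC (i j k : nat) : R :=
  match i, j, k with
  | O, S O, S (S O) => -2 | S O, O, S (S O) => 2
  | O, S (S O), S O => 2  | S (S O), O, S O => -2
  | S O, S (S O), O => -2 | S (S O), S O, O => 2
  | _, _, _ => 0
  end.

Definition gdiag (eps l1 l2 : R) (i : nat) : R :=
  match i with 0%nat => eps | 1%nat => l1 | _ => l2 end.

(* The bracket mu on R^3 obtained by identifying e_i = X_i / sqrt(g(X_i,X_i)):
   mu(e_i, e_j) = sum_k muC i j k e_k. *)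
Definition muC (eps l1 l2 : R) (i j k : nat) : R :=
  suC i j k * sqrt (gdiag eps l1 l2 k)
  / (sqrt (gdiag eps l1 l2 i) * sqrt (gdiag eps l1 l2 j)).

(* Levi-Civita connection of the left-invariant metric (orthonormal basis e_i),
   Koszul formula: Gam i j k = < nabla_{e_i} e_j , e_k >
   = 1/2 ( <[e_i,e_j],e_k> - <[e_j,e_k],e_i> + <[e_k,e_i],e_j> ). *)
Definition Gam (eps l1 l2 : R) (i j k : nat) : R :=
  / 2 * (muC eps l1 l2 i j k - muC eps l1 l2 j k i + muC eps l1 l2 k i j).

(* Matrix of the endomorphism nabla_{e_i}: entry (p,q) = <nabla_{e_i} e_q, e_p>. *)
Definition NablaM (eps l1 l2 : R) (i p q : nat) : R := Gam eps l1 l2 i q p.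

(* Curvature operator Rm(e_a /\ e_b) = nabla_{mu(e_a,e_b)} - [nabla_{e_a}, nabla_{e_b}],
   as a 3x3 matrix, entry (p,q). *)
Definition RmM (eps l1 l2 : R) (a b p q : nat) : R :=
  sum3 (fun c => muC eps l1 l2 a b c * NablaM eps l1 l2 c p q)
  - (sum3 (fun r => NablaM eps l1 l2 a p r * NablaM eps l1 l2 b r q)
     - sum3 (fun r => NablaM eps l1 l2 b p r * NablaM eps l1 l2 a r q)).

(* A tensor  (R^3)^{(x) m} (x) (R^3 x R^3) -> End(R^3), in components:
   T ws a b p q = entry (p,q) of T(e_{ws_1},...,e_{ws_m}; e_a, e_b). *)
Definition tensor := list nat -> nat -> nat -> nat -> nat -> R.

Fixpoint pos_sum (eps l1 l2 : R) (w : nat) (G : list nat -> R)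
    (pre ws : list nat) : R :=
  match ws with
  | nil => 0
  | x :: rest =>
      sum3 (fun m => Gam eps l1 l2 w x m * G (pre ++ m :: rest))
      + pos_sum eps l1 l2 w G (pre ++ [x]) rest
  end.

(* Covariant derivative of a left-invariant tensor T in direction e_w:
   (nabla_w T)(ws; a, b) = [nabla_w, T(ws; a, b)] - sum T(.. nabla_w (ws_i) ..; a, b)
                          - T(ws; nabla_w e_a, e_b) - T(ws; e_a, nabla_w e_b). *)
Definition covD (eps l1 l2 : R) (T : tensor) (w : nat) (ws : list nat)
    (a b p q : nat) : R :=
  sum3 (fun r => NablaM eps l1 l2 w p r * T ws a b r q)
  - sum3 (fun r => T ws a b p r * NablaM eps l1 l2 w r q)
  - pos_sum eps l1 l2 w (fun vs => T vs a b p q) nil ws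
  - sum3 (fun m => Gam eps l1 l2 w a m * T ws m b p q)
  - sum3 (fun m => Gam eps l1 l2 w b m * T ws a m p q).

Fixpoint Rmk (eps l1 l2 : R) (k : nat) : tensor :=
  match k with
  | O => fun _ a b p q => RmM eps l1 l2 a b p q
  | S k' => fun ws a b p q =>
      match ws with
      | nil => 0
      | w :: ws' => covD eps l1 l2 (Rmk eps l1 l2 k') w ws' a b p q
      end
  end.

Fixpoint idx_lists (k : nat) : list (list nat) :=
  match k with
  | O => [nil]
  | S k' => flat_map (fun ws => map (fun i => i :: ws) [0%nat; 1%nat; 2%nat])
                     (idx_lists k')
  end.

Definition sumL (l : list (list nat)) (f : list nat -> R) : R :=
  fold_right (fun ws acc => f ws + acc) 0 l.

(* Sum over the orthonormal basis e_a /\ e_b (a < b) of Lambda^2 R^3. *)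
Definition sum_wedge (f : nat -> nat -> R) : R :=
  f 0%nat 1%nat + f 0%nat 2%nat + f 1%nat 2%nat.

(* Standard Euclidean norm of Rm^k(mu) in (R^3)^{(x)k} (x) Lambda^2 R^3 -> so(3)
   (square root of the sum of squares of all components w.r.t. the standard bases;
   so(3) carries the entrywise Euclidean structure of 3x3 matrices). *)
Definition Rmk_norm (eps l1 l2 : R) (k : nat) : R :=
  sqrt (sumL (idx_lists k) (fun ws =>
    sum_wedge (fun a b => sum3 (fun p => sum3 (fun q =>
      (Rmk eps l1 l2 k ws a b p q) ^ 2))))).

Definition almost_Berger (eps l1 l2 : nat -> R) : Prop :=
  (forall n, 0 < eps n /\ 0 < l1 n /\ 0 < l2 n) /\
  Un_cv eps 0 /\ Un_cv l1 1 /\ Un_cv l2 1 /\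
  exists C, 0 < C /\ forall n, Rabs (l1 n - l2 n) <= C * eps n.

(* k belongs to the set whose supremum is the regularity index. *)
Definition reg_set (eps l1 l2 : nat -> R) (k : Z) : Prop :=
  Un_cv (fun n => Rpower (eps n) (- IZR k / 2) * Rabs (l1 n - l2 n)) 0.

(* reg(mu^(n)) >= 2 : the supremum of the integer set reg_set is >= 2, i.e.
   (for a set of integers) it contains some k >= 2. *)
Definition reg_ge (eps l1 l2 : nat -> R) (m : Z) : Prop :=
  exists k : Z, (m <= k)%Z /\ reg_set eps l1 l2 k.

From Stdlib Require Import Reals ZArith Lra Lia List.
Import ListNotations.
Open Scope R_scope.

(* In the orthonormal frame the Levi-Civita connection is nabla_{e_w} = c_w E_w, with
   E_w the infinitesimal rotation about e_w and, writing a = sqrt eps and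
   D = |l1 - l2| / eps, c_0 = O(1/a) while c_1, c_2 = O(a) and c_1 + c_2 = O(D a).
   By left-invariance, Rm^k is obtained from Rm by k applications of the derivations
   -c_w E_w acting on all tensor slots.  Rm is of order 1 and, because the Berger
   metric (l1 = l2) is invariant under the rotation about e_0, E_0 Rm is of order D.
   Track bounds for the tensor and for its E_0-derivative together: a derivative
   along e_0 costs 1/a but only produces E_0-derivatives, the others gain a factor a,
   and by [E_0, E_1] = -E_2, [E_0, E_2] = E_1 the E_0-derivative of the next tensor
   picks up besides these only the coefficient c_1 + c_2.  This gives
   |Rm^k| = O(a + D a^(-k)) for k >= 1, which is the claim, uniformly once eps <= 1
   and l1, l2 are close to 1; the finitely many remaining terms go into the constant. *)

Ltac destruct_idx i := destruct i as [|[|[|i]]].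

(* [F] is a multilinear form on R^3 given by its values on basis indices; [der_act G F]
   is the action of the endomorphism e_j |-> sum_m G j m e_m on it as a derivation,
   one slot at a time. *)
Fixpoint der_act (G : nat -> nat -> R) (F : list nat -> R) (l : list nat) : R :=
  match l with
  | nil => 0
  | x :: r => sum3 (fun m => G x m * F (m :: r)) + der_act G (fun v => F (x :: v)) r
  end.

Lemma der_act_plus G F1 F2 l :
  der_act G (fun v => F1 v + F2 v) l = der_act G F1 l + der_act G F2 l.
Proof.
  revert F1 F2; induction l as [|x r IH]; intros F1 F2; simpl; [ring|].
  rewrite (IH (fun v => F1 (x :: v)) (fun v => F2 (x :: v))); unfold sum3; ring.
Qed.

Lemma der_act_scal G c F l :
  der_act G (fun v => c * F v) l = c * der_act G F l.
Proof.
  revert F; induction l as [|x r IH]; intros F; simpl; [ring|].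
  rewrite (IH (fun v => F (x :: v))); unfold sum3; ring.
Qed.

Lemma der_act_scal_op G c F l :
  der_act (fun j m => c * G j m) F l = c * der_act G F l.
Proof.
  revert F; induction l as [|x r IH]; intros F; simpl; [ring|].
  rewrite IH; unfold sum3; ring.
Qed.

Lemma der_act_ext_op G G' F l :
  (forall j m, G j m = G' j m) -> der_act G F l = der_act G' F l.
Proof.
  intros HG; revert F; induction l as [|x r IH]; intros F; simpl; auto.
  rewrite IH; unfold sum3; rewrite !HG; reflexivity.
Qed.

Lemma der_act_ext G F F' l :
  (forall v, length v = length l -> F v = F' v) -> der_act G F l = der_act G F' l.
Proof.
  revert F F'; induction l as [|x r IH]; intros F F' HF; simpl; auto.
  rewrite (IH (fun v => F (x :: v)) (fun v => F' (x :: v))).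
  - unfold sum3; rewrite !HF by (simpl; auto); reflexivity.
  - intros v Hv; apply HF; simpl; auto.
Qed.

Lemma der_act_app G F l1 l2 :
  der_act G F (l1 ++ l2) =
  der_act G (fun v => F (v ++ l2)) l1 + der_act G (fun v => F (l1 ++ v)) l2.
Proof.
  revert F; induction l1 as [|x r IH]; intros F; simpl; [rewrite Rplus_0_l; reflexivity|].
  rewrite IH; ring.
Qed.

Definition mat_comm (G1 G2 : nat -> nat -> R) (j n : nat) : R :=
  sum3 (fun m => G1 j m * G2 m n) - sum3 (fun m => G2 j m * G1 m n).

Lemma der_act_comm G1 G2 F l :
  der_act G1 (der_act G2 F) l =
  der_act G2 (der_act G1 F) l + der_act (mat_comm G1 G2) F l.
Proof.
  revert F; induction l as [|x r IH]; intros F; [simpl; ring|].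
  cbn [der_act]; unfold sum3 at 2 3 6 7.
  rewrite !der_act_plus, !der_act_scal, (IH (fun u => F (x :: u))).
  unfold sum3, mat_comm; cbn [der_act]; unfold sum3; ring.
Qed.

Definition tensor_bound (n : nat) (F : list nat -> R) (M : R) : Prop :=
  forall l, length l = n -> Rabs (F l) <= M.

Lemma tensor_bound_le n F M M' : tensor_bound n F M -> M <= M' -> tensor_bound n F M'.
Proof. intros HF HM l Hl; eapply Rle_trans; [apply HF|]; auto. Qed.

Lemma Rabs_sum3_le (h : nat -> R) M :
  (forall m, Rabs (h m) <= M) -> Rabs (sum3 h) <= 3 * M.
Proof.
  intros H; unfold sum3.
  pose proof (H 0%nat); pose proof (H 1%nat); pose proof (H 2%nat).
  pose proof (Rabs_triang (h 0%nat + h 1%nat) (h 2%nat)).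
  pose proof (Rabs_triang (h 0%nat) (h 1%nat)); lra.
Qed.

Lemma der_act_bound G F n M :
  (forall j m, Rabs (G j m) <= 1) -> tensor_bound n F M ->
  tensor_bound n (der_act G F) (3 * INR n * M).
Proof.
  intros HG; revert F; induction n as [|n IH]; intros F HF l Hl.
  - destruct l; [|discriminate]; simpl; rewrite Rabs_R0; lra.
  - destruct l as [|x r]; [discriminate|]; injection Hl as Hl; simpl der_act.
    assert (h1 : Rabs (sum3 (fun m => G x m * F (m :: r))) <= 3 * M).
    { apply Rabs_sum3_le; intros m; rewrite Rabs_mult.
      pose proof (HG x m); pose proof (Rabs_pos (G x m)).
      assert (Rabs (F (m :: r)) <= M) by (apply HF; simpl; lia).
      pose proof (Rabs_pos (F (m :: r))); nra. }
    assert (h2 : Rabs (der_act G (fun v => F (x :: v)) r) <= 3 * INR n * M).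
    { apply IH; auto; intros v Hv; apply HF; simpl; lia. }
    pose proof (Rabs_triang (sum3 (fun m => G x m * F (m :: r)))
                            (der_act G (fun v => F (x :: v)) r)).
    rewrite S_INR; lra.
Qed.

(* Coefficient of e_m in E_w e_j, E_w the infinitesimal rotation about e_w. *)
Definition so3_gen (w j m : nat) : R :=
  match w, j, m with
  | O, S O, S (S O) => -1 | O, S (S O), S O => 1
  | S O, O, S (S O) => 1 | S O, S (S O), O => -1
  | S (S O), O, S O => 1 | S (S O), S O, O => -1
  | _, _, _ => 0
  end.

Lemma so3_gen_anti w j m : so3_gen w j m = - so3_gen w m j.
Proof. unfold so3_gen; destruct_idx w; destruct_idx j; destruct_idx m; lra. Qed.

Lemma Rabs_so3_gen_le w j m : Rabs (so3_gen w j m) <= 1.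
Proof.
  unfold so3_gen, Rabs; destruct_idx w; destruct_idx j; destruct_idx m;
    destruct Rcase_abs; lra.
Qed.

Lemma so3_gen_out w j m :
  (3 <= w)%nat \/ (3 <= j)%nat \/ (3 <= m)%nat -> so3_gen w j m = 0.
Proof. intros H; unfold so3_gen; destruct_idx w; destruct_idx j; destruct_idx m; auto; lia. Qed.

Lemma mat_comm_so3_gen_01 j m : mat_comm (so3_gen 0) (so3_gen 1) j m = -1 * so3_gen 2 j m.
Proof. unfold mat_comm, sum3, so3_gen; destruct_idx j; destruct_idx m; lra. Qed.

Lemma mat_comm_so3_gen_02 j m : mat_comm (so3_gen 0) (so3_gen 2) j m = so3_gen 1 j m.
Proof. unfold mat_comm, sum3, so3_gen; destruct_idx j; destruct_idx m; lra. Qed.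

Lemma mat_comm_so3_gen_00 j m : mat_comm (so3_gen 0) (so3_gen 0) j m = 0 * so3_gen 0 j m.
Proof. unfold mat_comm, sum3; ring. Qed.

Lemma sum3_so3_gen_0 w h :
  sum3 (fun m => so3_gen 0 w m * h m) =
  match w with 1%nat => - h 2%nat | 2%nat => h 1%nat | _ => 0 end.
Proof. unfold sum3, so3_gen; destruct_idx w; ring. Qed.

Definition mu_x eps l1 l2 := sqrt l2 / (sqrt eps * sqrt l1).
Definition mu_y eps l1 l2 := sqrt l1 / (sqrt eps * sqrt l2).
Definition mu_z eps l1 l2 := sqrt eps / (sqrt l1 * sqrt l2).

Definition bracket (x y z : R) (i j k : nat) : R :=
  match i, j, k with
  | O, S O, S (S O) => -2 * x | S O, O, S (S O) => 2 * x
  | O, S (S O), S O => 2 * y  | S (S O), O, S O => -2 * y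
  | S O, S (S O), O => -2 * z | S (S O), S O, O => 2 * z
  | _, _, _ => 0
  end.

Definition conn_coef (x y z : R) (w : nat) : R :=
  match w with
  | O => x + y - z | S O => x - y + z | S (S O) => x - y - z | _ => 0
  end.

Definition curv0 (x y z : R) (a b p q : nat) : R :=
  sum3 (fun c => bracket x y z a b c * (conn_coef x y z c * so3_gen c q p))
  - (sum3 (fun r => conn_coef x y z a * so3_gen a r p * (conn_coef x y z b * so3_gen b q r))
     - sum3 (fun r => conn_coef x y z b * so3_gen b r p * (conn_coef x y z a * so3_gen a q r))).

(* [curv (mu_x eps l1 l2) (mu_y eps l1 l2) (mu_z eps l1 l2) k (ws ++ [a; b; p; q])]
   is the component Rm^k(ws; e_a, e_b)_(p,q) (lemma [Rmk_eq_curv]). *)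
Fixpoint curv (x y z : R) (k : nat) (l : list nat) : R :=
  match k, l with
  | O, [a; b; p; q] => curv0 x y z a b p q
  | S k', w :: l' => - conn_coef x y z w * der_act (so3_gen w) (curv x y z k') l'
  | _, _ => 0
  end.

Section Frame.

Variables eps l1 l2 : R.
Hypotheses (Heps : 0 < eps) (Hl1 : 0 < l1) (Hl2 : 0 < l2).

Let x := mu_x eps l1 l2.
Let y := mu_y eps l1 l2.
Let z := mu_z eps l1 l2.

Lemma muC_eq_bracket i j k : muC eps l1 l2 i j k = bracket x y z i j k.
Proof.
  pose proof (sqrt_lt_R0 _ Heps); pose proof (sqrt_lt_R0 _ Hl1); pose proof (sqrt_lt_R0 _ Hl2).
  unfold muC, bracket, x, y, z, mu_x, mu_y, mu_z, suC, gdiag.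
  destruct_idx i; destruct_idx j; destruct_idx k; field; lra.
Qed.

Lemma Gam_eq_conn w j m : Gam eps l1 l2 w j m = conn_coef x y z w * so3_gen w j m.
Proof.
  unfold Gam; rewrite !muC_eq_bracket.
  unfold bracket, conn_coef, so3_gen; destruct_idx w; destruct_idx j; destruct_idx m; lra.
Qed.

Lemma RmM_eq_curv0 a b p q : RmM eps l1 l2 a b p q = curv0 x y z a b p q.
Proof. unfold RmM, curv0, NablaM, sum3; rewrite !Gam_eq_conn, !muC_eq_bracket; reflexivity. Qed.

Lemma pos_sum_eq_der_act w F pre ws :
  pos_sum eps l1 l2 w F pre ws = der_act (Gam eps l1 l2 w) (fun v => F (pre ++ v)) ws.
Proof.
  revert pre; induction ws as [|m r IH]; intros pre; simpl; auto.
  rewrite IH; f_equal; apply der_act_ext; intros v _; rewrite <- app_assoc; reflexivity.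
Qed.

(* Left-invariance: covariant differentiation in direction e_w is the derivation
   action of -nabla_{e_w} on all slots, indices (a, b, p, q) included. *)
Lemma covD_eq_der_act (T : tensor) F n w ws a b p q :
  (forall vs a b p q, length vs = n -> T vs a b p q = F (vs ++ [a; b; p; q])) ->
  length ws = n ->
  covD eps l1 l2 T w ws a b p q =
  - conn_coef x y z w * der_act (so3_gen w) F (ws ++ [a; b; p; q]).
Proof.
  intros HT Hl; unfold covD; rewrite pos_sum_eq_der_act.
  rewrite (der_act_ext_op _ (fun j m => conn_coef x y z w * so3_gen w j m))
    by (intros; apply Gam_eq_conn).
  rewrite der_act_scal_op, der_act_app.
  rewrite (der_act_ext _ (fun v => F (v ++ [a; b; p; q])) (fun v => T v a b p q))
    by (intros v Hv; rewrite HT; auto; lia).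
  cbn [der_act app]; unfold NablaM, sum3; rewrite !Gam_eq_conn, <- !HT by auto.
  rewrite (so3_gen_anti w 0 p), (so3_gen_anti w 1 p), (so3_gen_anti w 2 p); simpl; ring.
Qed.

Lemma Rmk_eq_curv k ws a b p q :
  length ws = k -> Rmk eps l1 l2 k ws a b p q = curv x y z k (ws ++ [a; b; p; q]).
Proof.
  revert ws a b p q; induction k as [|k IH]; intros ws a b p q Hl.
  - destruct ws; [apply RmM_eq_curv0 | discriminate].
  - destruct ws as [|w ws]; [discriminate|]; injection Hl as Hl.
    exact (covD_eq_der_act _ (curv x y z k) k w ws a b p q IH Hl).
Qed.

End Frame.

Definition curv_size x y z :=
  Rabs (x - y) * (Rabs x + Rabs y + Rabs z) + Rabs (x * z) + Rabs (y * z) + z * z.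
Definition asym_size x y z := Rabs (x - y) * (Rabs x + Rabs y + Rabs z).

Lemma curv_size_ge0 x y z : 0 <= curv_size x y z.
Proof.
  unfold curv_size.
  pose proof (Rabs_pos (x - y)); pose proof (Rabs_pos x); pose proof (Rabs_pos y);
  pose proof (Rabs_pos z); pose proof (Rabs_pos (x * z)); pose proof (Rabs_pos (y * z)); nra.
Qed.

Lemma asym_size_ge0 x y z : 0 <= asym_size x y z.
Proof.
  unfold asym_size.
  pose proof (Rabs_pos (x - y)); pose proof (Rabs_pos x); pose proof (Rabs_pos y);
  pose proof (Rabs_pos z); nra.
Qed.

Definition lin_form (g : R -> R -> R -> R) :=
  forall x y z, g x y z = g 1 0 0 * x + g 0 1 0 * y + g 0 0 1 * z.

(* Coefficients of a quadratic form recovered from its values at six points. *)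
Definition quad_form (f : R -> R -> R -> R) :=
  forall x y z, f x y z =
    f 1 0 0 * (x * x) + (f 1 1 0 - f 1 0 0 - f 0 1 0) * (x * y) + f 0 1 0 * (y * y)
    + (f 1 0 1 - f 1 0 0 - f 0 0 1) * (x * z) + (f 0 1 1 - f 0 1 0 - f 0 0 1) * (y * z)
    + f 0 0 1 * (z * z).

Lemma quad_form_mul g h : lin_form g -> lin_form h -> quad_form (fun x y z => g x y z * h x y z).
Proof.
  intros Hg Hh x y z.
  rewrite (Hg x y z), (Hh x y z), (Hg 1 1 0), (Hh 1 1 0), (Hg 1 0 1), (Hh 1 0 1),
    (Hg 0 1 1), (Hh 0 1 1), (Hg 1 0 0), (Hh 1 0 0), (Hg 0 1 0), (Hh 0 1 0),
    (Hg 0 0 1), (Hh 0 0 1).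
  ring.
Qed.

Lemma lin_form_scal c g : lin_form g -> lin_form (fun x y z => g x y z * c).
Proof. intros Hg x y z; rewrite (Hg x y z); ring. Qed.

Lemma quad_form_plus f g :
  quad_form f -> quad_form g -> quad_form (fun x y z => f x y z + g x y z).
Proof. intros Hf Hg x y z; rewrite (Hf x y z), (Hg x y z); ring. Qed.

Lemma quad_form_minus f g :
  quad_form f -> quad_form g -> quad_form (fun x y z => f x y z - g x y z).
Proof. intros Hf Hg x y z; rewrite (Hf x y z), (Hg x y z); ring. Qed.

Lemma quad_form_scal c f : quad_form f -> quad_form (fun x y z => c * f x y z).
Proof. intros Hf x y z; rewrite (Hf x y z); ring. Qed.

Lemma quad_form_0 : quad_form (fun _ _ _ => 0).
Proof. intros x y z; ring. Qed.

Lemma Rabs_mult_le_compat c f t M : Rabs c <= t -> Rabs f <= M -> Rabs (c * f) <= t * M.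
Proof. intros; rewrite Rabs_mult; apply Rmult_le_compat; auto; apply Rabs_pos. Qed.

Lemma Rabs_triang3 a b c : Rabs (a + b + c) <= Rabs a + Rabs b + Rabs c.
Proof. pose proof (Rabs_triang (a + b) c); pose proof (Rabs_triang a b); lra. Qed.

(* A form vanishing at (1,1,0) is (x - y)(A x - B y) + (P x + Q y) z + C z^2. *)
Lemma quad_form_bound f :
  quad_form f -> f 1 1 0 = 0 ->
  Rabs (f 1 0 0) <= 10 -> Rabs (f 0 1 0) <= 10 -> Rabs (f 0 0 1) <= 10 ->
  Rabs (f 1 0 1) <= 10 -> Rabs (f 0 1 1) <= 10 ->
  forall x y z, Rabs (f x y z) <= 30 * curv_size x y z.
Proof.
  intros Hf H0 h1 h2 h3 h4 h5 x y z.
  set (A := f 1 0 0) in *; set (B := f 0 1 0) in *; set (C := f 0 0 1) in *;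
  set (P := f 1 0 1) in *; set (Q := f 0 1 1) in *.
  assert (e : f x y z = A * (x * (x - y)) + - B * (y * (x - y)) + (P - A - C) * (x * z)
                        + (Q - B - C) * (y * z) + C * (z * z))
    by (rewrite Hf, H0; unfold A, B, C, P, Q; ring).
  assert (hPAC : Rabs (P - A - C) <= 30).
  { unfold Rminus; pose proof (Rabs_triang3 P (- A) (- C)); rewrite !Rabs_Ropp in *; lra. }
  assert (hQBC : Rabs (Q - B - C) <= 30).
  { unfold Rminus; pose proof (Rabs_triang3 Q (- B) (- C)); rewrite !Rabs_Ropp in *; lra. }
  pose proof (Rabs_mult_le_compat A (x * (x - y)) 10 _ h1 (Rle_refl _)).
  pose proof (Rabs_mult_le_compat (- B) (y * (x - y)) 10 _
                ltac:(rewrite Rabs_Ropp; auto) (Rle_refl _)).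
  pose proof (Rabs_mult_le_compat _ (x * z) 30 _ hPAC (Rle_refl _)).
  pose proof (Rabs_mult_le_compat _ (y * z) 30 _ hQBC (Rle_refl _)).
  pose proof (Rabs_mult_le_compat C (z * z) 10 _ h3 (Rle_refl _)).
  assert (zz : Rabs (z * z) = z * z) by (apply Rabs_pos_eq; nra).
  rewrite e; unfold curv_size.
  pose proof (Rabs_triang3 (A * (x * (x - y))) (- B * (y * (x - y))) ((P - A - C) * (x * z))).
  pose proof (Rabs_triang (A * (x * (x - y)) + - B * (y * (x - y)) + (P - A - C) * (x * z)
                           + (Q - B - C) * (y * z)) (C * (z * z))).
  pose proof (Rabs_triang (A * (x * (x - y)) + - B * (y * (x - y)) + (P - A - C) * (x * z))
                          ((Q - B - C) * (y * z))).
  pose proof (Rabs_pos x); pose proof (Rabs_pos y); pose proof (Rabs_pos z);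
  pose proof (Rabs_pos (x - y)); pose proof (Rabs_pos (x * z)); pose proof (Rabs_pos (y * z)).
  rewrite !Rabs_mult, zz in *; nra.
Qed.

(* Under the extra conditions the form factors as (x - y)(A x - B y + (P - A) z). *)
Lemma quad_form_bound_asym f :
  quad_form f -> f 1 1 0 = 0 -> f 0 0 1 = 0 -> f 1 0 1 + f 0 1 1 = f 1 0 0 + f 0 1 0 ->
  Rabs (f 1 0 0) <= 10 -> Rabs (f 0 1 0) <= 10 -> Rabs (f 1 0 1) <= 10 ->
  forall x y z, Rabs (f x y z) <= 20 * asym_size x y z.
Proof.
  intros Hf H0 H1 H2 h1 h2 h3 x y z.
  set (A := f 1 0 0) in *; set (B := f 0 1 0) in *; set (P := f 1 0 1) in *.
  assert (e : f x y z = (x - y) * (A * x + - B * y + (P - A) * z)).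
  { rewrite Hf, H0, H1; replace (f 0 1 1) with (A + B - P) by lra; unfold A, B, P; ring. }
  rewrite e; unfold asym_size; rewrite Rabs_mult.
  assert (hPA : Rabs (P - A) <= 20).
  { unfold Rminus; pose proof (Rabs_triang P (- A)); rewrite Rabs_Ropp in *; lra. }
  pose proof (Rabs_mult_le_compat A x 10 _ h1 (Rle_refl _)).
  pose proof (Rabs_mult_le_compat (- B) y 10 _ ltac:(rewrite Rabs_Ropp; auto) (Rle_refl _)).
  pose proof (Rabs_mult_le_compat _ z 20 _ hPA (Rle_refl _)).
  pose proof (Rabs_triang3 (A * x) (- B * y) ((P - A) * z)).
  pose proof (Rabs_pos (x - y)); pose proof (Rabs_pos x); pose proof (Rabs_pos y);
  pose proof (Rabs_pos z); nra.
Qed.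

Lemma lin_form_bracket a b c : lin_form (fun x y z => bracket x y z a b c).
Proof. intros x y z; unfold bracket; destruct_idx a; destruct_idx b; destruct_idx c; ring. Qed.

Lemma lin_form_conn_coef w : lin_form (fun x y z => conn_coef x y z w).
Proof. intros x y z; unfold conn_coef; destruct_idx w; ring. Qed.

Lemma quad_form_curv0 a b p q : quad_form (fun x y z => curv0 x y z a b p q).
Proof.
  unfold curv0, sum3.
  repeat first [apply quad_form_minus | apply quad_form_plus].
  all: apply quad_form_mul;
    first [apply lin_form_bracket | apply lin_form_scal, lin_form_conn_coef].
Qed.

Lemma quad_form_rot_curv0 a b p q :
  quad_form (fun x y z => der_act (so3_gen 0) (curv x y z 0) [a; b; p; q]).
Proof.
  cbn [der_act curv]; unfold sum3.
  repeat first [apply quad_form_curv0 | apply quad_form_plus | apply quad_form_0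
               | apply quad_form_scal].
Qed.

Lemma conn_coef_out x y z w : (3 <= w)%nat -> conn_coef x y z w = 0.
Proof. intros H; unfold conn_coef; destruct_idx w; auto; lia. Qed.

Lemma bracket_out x y z a b c : (3 <= a)%nat \/ (3 <= b)%nat -> bracket x y z a b c = 0.
Proof. intros H; unfold bracket; destruct_idx a; destruct_idx b; destruct_idx c; auto; lia. Qed.

Lemma curv0_out x y z a b p q :
  (3 <= a)%nat \/ (3 <= b)%nat \/ (3 <= p)%nat \/ (3 <= q)%nat -> curv0 x y z a b p q = 0.
Proof.
  intros H; unfold curv0, sum3; destruct H as [H|[H|[H|H]]].
  - rewrite !(bracket_out x y z a), !(conn_coef_out x y z a) by auto; ring.
  - rewrite !(bracket_out x y z a b), !(conn_coef_out x y z b) by auto; ring.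
  - rewrite !(so3_gen_out _ _ p) by auto; ring.
  - rewrite !(so3_gen_out _ q) by auto; ring.
Qed.

Lemma rot_curv0_out x y z a b p q :
  (3 <= a)%nat \/ (3 <= b)%nat \/ (3 <= p)%nat \/ (3 <= q)%nat ->
  der_act (so3_gen 0) (curv x y z 0) [a; b; p; q] = 0.
Proof.
  intros H; cbn [der_act curv]; unfold sum3; destruct H as [H|[H|[H|H]]].
  - rewrite !(so3_gen_out 0 a), !(curv0_out x y z a) by auto; ring.
  - rewrite !(so3_gen_out 0 b), !(curv0_out x y z _ b) by auto; ring.
  - rewrite !(so3_gen_out 0 p), !(curv0_out x y z _ _ p) by auto; ring.
  - rewrite !(so3_gen_out 0 q), !(curv0_out x y z _ _ _ q) by auto; ring.
Qed.

Lemma idx_cases a : (3 <= a)%nat \/ a = 0%nat \/ a = 1%nat \/ a = 2%nat.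
Proof. lia. Qed.

Ltac solve_Rabs := unfold Rabs; destruct Rcase_abs; lra.

Lemma Rabs_curv0_le a b p q x y z : Rabs (curv0 x y z a b p q) <= 30 * curv_size x y z.
Proof.
  pose proof (curv_size_ge0 x y z).
  destruct (idx_cases a) as [Ha|Ha]; [rewrite curv0_out, Rabs_R0 by auto; lra|].
  destruct (idx_cases b) as [Hb|Hb]; [rewrite curv0_out, Rabs_R0 by auto; lra|].
  destruct (idx_cases p) as [Hp|Hp]; [rewrite curv0_out, Rabs_R0 by auto; lra|].
  destruct (idx_cases q) as [Hq|Hq]; [rewrite curv0_out, Rabs_R0 by auto; lra|].
  apply (quad_form_bound (fun x y z => curv0 x y z a b p q)); [apply quad_form_curv0|..];
  destruct Ha as [ -> | [ -> | -> ] ]; destruct Hb as [ -> | [ -> | -> ] ];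
  destruct Hp as [ -> | [ -> | -> ] ]; destruct Hq as [ -> | [ -> | -> ] ];
  cbv beta iota delta [curv0 sum3 bracket conn_coef so3_gen]; solve [lra | solve_Rabs].
Qed.

(* For x = y the curvature is invariant under the rotation generated by e_0 (the
   Berger metric is U(2)-invariant), which is why only [asym_size] survives. *)
Lemma Rabs_rot_curv0_le a b p q x y z :
  Rabs (der_act (so3_gen 0) (curv x y z 0) [a; b; p; q]) <= 20 * asym_size x y z.
Proof.
  pose proof (asym_size_ge0 x y z).
  destruct (idx_cases a) as [Ha|Ha]; [rewrite rot_curv0_out, Rabs_R0 by auto; lra|].
  destruct (idx_cases b) as [Hb|Hb]; [rewrite rot_curv0_out, Rabs_R0 by auto; lra|].
  destruct (idx_cases p) as [Hp|Hp]; [rewrite rot_curv0_out, Rabs_R0 by auto; lra|].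
  destruct (idx_cases q) as [Hq|Hq]; [rewrite rot_curv0_out, Rabs_R0 by auto; lra|].
  apply (quad_form_bound_asym (fun x y z => der_act (so3_gen 0) (curv x y z 0) [a; b; p; q]));
    [apply quad_form_rot_curv0|..];
  destruct Ha as [ -> | [ -> | -> ] ]; destruct Hb as [ -> | [ -> | -> ] ];
  destruct Hp as [ -> | [ -> | -> ] ]; destruct Hq as [ -> | [ -> | -> ] ];
  cbn [der_act curv]; cbv beta iota delta [curv0 sum3 bracket conn_coef so3_gen];
  solve [lra | solve_Rabs].
Qed.

Lemma tensor_bound_ge0 n F M : tensor_bound n F M -> 0 <= M.
Proof.
  intros HF; eapply Rle_trans; [apply Rabs_pos|].
  apply (HF (repeat 0%nat n)), repeat_length.
Qed.

Section Step.

Variables (x y z t s u al be : R) (k : nat).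
Let F := curv x y z k.
Let N := 3 * INR (k + 4).
Hypotheses (HF : tensor_bound (k + 4) F al)
           (HF0 : tensor_bound (k + 4) (der_act (so3_gen 0) F) be)
           (Hc0 : Rabs (conn_coef x y z 0) <= t)
           (Hc1 : Rabs (conn_coef x y z 1) <= s)
           (Hc2 : Rabs (conn_coef x y z 2) <= s).

Let al_ge0 : 0 <= al := tensor_bound_ge0 _ _ _ HF.
Let be_ge0 : 0 <= be := tensor_bound_ge0 _ _ _ HF0.
Let t_ge0 : 0 <= t := Rle_trans _ _ _ (Rabs_pos _) Hc0.
Let s_ge0 : 0 <= s := Rle_trans _ _ _ (Rabs_pos _) Hc1.
Let N_ge0 : 0 <= N.
Proof. unfold N; pose proof (pos_INR (k + 4)); lra. Qed.

Let HFw w : tensor_bound (k + 4) (der_act (so3_gen w) F) (N * al).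
Proof. exact (der_act_bound _ _ _ _ (Rabs_so3_gen_le w) HF). Qed.

Let HF0w w : tensor_bound (k + 4) (der_act (so3_gen w) (der_act (so3_gen 0) F)) (N * be).
Proof. exact (der_act_bound _ _ _ _ (Rabs_so3_gen_le w) HF0). Qed.

Lemma curv_succ_bound : tensor_bound (S k + 4) (curv x y z (S k)) (t * be + s * (N * al)).
Proof.
  intros l Hl; destruct l as [|w l]; [discriminate|]; injection Hl as Hl.
  assert (0 <= N * al) by (apply Rmult_le_pos; auto).
  assert (0 <= t * be /\ 0 <= s * (N * al)) as [] by (split; apply Rmult_le_pos; auto).
  cbn [curv]; fold F; rewrite <- Ropp_mult_distr_l, Rabs_Ropp.
  destruct w as [|[|[|w]]].
  - pose proof (Rabs_mult_le_compat _ _ _ _ Hc0 (HF0 l Hl)); lra.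
  - pose proof (Rabs_mult_le_compat _ _ _ _ Hc1 (HFw 1 l Hl)); lra.
  - pose proof (Rabs_mult_le_compat _ _ _ _ Hc2 (HFw 2 l Hl)); lra.
  - unfold conn_coef; rewrite Rmult_0_l, Rabs_R0; lra.
Qed.

Hypothesis Hc12 : Rabs (conn_coef x y z 1 + conn_coef x y z 2) <= u.

(* Through [E_0, E_1] = -E_2 and [E_0, E_2] = E_1 the terms not controlled by [be]
   come with the coefficient c_1 + c_2 = 2 (x - y). *)
Lemma rot_curv_succ_bound :
  tensor_bound (S k + 4) (der_act (so3_gen 0) (curv x y z (S k)))
    (N * (t * be + u * al + s * be)).
Proof.
  intros l Hl; destruct l as [|w l]; [discriminate|]; injection Hl as Hl.
  assert (0 <= N * be /\ 0 <= N * al) as [] by (split; apply Rmult_le_pos; auto).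
  assert (0 <= t * (N * be) /\ 0 <= u * (N * al) /\ 0 <= s * (N * be)) as (? & ? & ?).
  { pose proof (Rle_trans _ _ _ (Rabs_pos _) Hc12); repeat split; apply Rmult_le_pos; auto. }
  assert (e : N * (t * be + u * al + s * be) = t * (N * be) + u * (N * al) + s * (N * be))
    by ring.
  rewrite e; cbn [der_act curv].
  rewrite der_act_scal, der_act_comm, sum3_so3_gen_0; fold F.
  destruct w as [|[|[|w]]].
  - rewrite (der_act_ext_op _ _ _ _ mat_comm_so3_gen_00), der_act_scal_op.
    match goal with |- Rabs ?X <= _ =>
      replace X with (- conn_coef x y z 0 * der_act (so3_gen 0) (der_act (so3_gen 0) F) l)
        by ring end.
    rewrite <- Ropp_mult_distr_l, Rabs_Ropp.
    pose proof (Rabs_mult_le_compat _ _ _ _ Hc0 (HF0w 0 l Hl)); lra.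
  - rewrite (der_act_ext_op _ _ _ _ mat_comm_so3_gen_01), der_act_scal_op.
    match goal with |- Rabs ?X <= _ =>
      replace X with ((conn_coef x y z 1 + conn_coef x y z 2) * der_act (so3_gen 2) F l
                      + - (conn_coef x y z 1 * der_act (so3_gen 1) (der_act (so3_gen 0) F) l))
        by ring end.
    pose proof (Rabs_mult_le_compat _ _ _ _ Hc12 (HFw 2 l Hl)).
    pose proof (Rabs_mult_le_compat _ _ _ _ Hc1 (HF0w 1 l Hl)).
    eapply Rle_trans; [apply Rabs_triang|]; rewrite Rabs_Ropp; lra.
  - rewrite (der_act_ext_op _ _ _ _ mat_comm_so3_gen_02).
    match goal with |- Rabs ?X <= _ =>
      replace X with (- ((conn_coef x y z 1 + conn_coef x y z 2) * der_act (so3_gen 1) F l)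
                      + - (conn_coef x y z 2 * der_act (so3_gen 2) (der_act (so3_gen 0) F) l))
        by ring end.
    pose proof (Rabs_mult_le_compat _ _ _ _ Hc12 (HFw 1 l Hl)).
    pose proof (Rabs_mult_le_compat _ _ _ _ Hc2 (HF0w 2 l Hl)).
    eapply Rle_trans; [apply Rabs_triang|]; rewrite !Rabs_Ropp; lra.
  - unfold conn_coef; rewrite Rplus_0_l, Ropp_0, Rmult_0_l, Rabs_R0; lra.
Qed.

End Step.

Lemma Rinv_ge_1 a : 0 < a <= 1 -> 1 <= / a.
Proof. intros; rewrite <- Rinv_1; apply Rinv_le_contravar; lra. Qed.

(* In the application a = sqrt eps and D = |l1 - l2| / eps. *)
Record berger_bounds (K x y z a D : R) : Prop := {
  bb_a : 0 < a <= 1;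
  bb_D : 0 <= D <= K;
  bb_coef0 : Rabs (conn_coef x y z 0) <= K / a;
  bb_coef1 : Rabs (conn_coef x y z 1) <= K * a;
  bb_coef2 : Rabs (conn_coef x y z 2) <= K * a;
  bb_coef12 : Rabs (conn_coef x y z 1 + conn_coef x y z 2) <= K * D * a;
  bb_curv_size : curv_size x y z <= K;
  bb_asym_size : asym_size x y z <= K * D }.

Lemma curv_bounds_step K x y z a D k U V p :
  berger_bounds K x y z a D -> 0 <= U -> 0 <= V -> 1 <= p ->
  tensor_bound (k + 4) (curv x y z k) (U * (1 + D * p)) ->
  tensor_bound (k + 4) (der_act (so3_gen 0) (curv x y z k)) (V * D * p) ->
  let N := 3 * INR (k + 4) in
  tensor_bound (S k + 4) (curv x y z (S k)) (K * (V + N * U) * (a + D * (p / a))) /\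
  tensor_bound (S k + 4) (der_act (so3_gen 0) (curv x y z (S k)))
    (N * K * (2 * V + U + K * U) * D * (p / a)).
Proof.
  intros [[ha ha1] [hD hDK] h0 h1 h2 h12 _ _] hU hV hp HF HF0 N.
  assert (hN : 0 <= N) by (unfold N; pose proof (pos_INR (k + 4)); lra).
  assert (ia1 : 1 <= / a) by (apply Rinv_ge_1; lra).
  set (q := p / a).
  assert (haq : a <= q) by (unfold q, Rdiv; nra).
  assert (hapq : a * p <= q) by (unfold q, Rdiv; nra).
  assert (hDq : 0 <= D * q) by nra.
  split.
  - eapply tensor_bound_le; [exact (curv_succ_bound x y z (K / a) (K * a) _ _ k HF HF0 h0 h1 h2)|].
    fold N.
    replace (K / a * (V * D * p)) with (K * V * (D * q)) by (unfold q, Rdiv; ring).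
    assert (0 <= K * (N * U)) by (apply Rmult_le_pos; nra).
    assert (0 <= K * V * a) by (apply Rmult_le_pos; nra).
    assert (K * (N * U) * (D * (a * p)) <= K * (N * U) * (D * q))
      by (apply Rmult_le_compat_l; nra).
    nra.
  - eapply tensor_bound_le;
      [exact (rot_curv_succ_bound x y z (K / a) (K * a) (K * D * a) _ _ k HF HF0 h0 h1 h2 h12)|].
    fold N; rewrite !(Rmult_assoc N); apply Rmult_le_compat_l; [auto|].
    replace (K / a * (V * D * p)) with (K * (V * (D * q))) by (unfold q, Rdiv; ring).
    assert (hKU : 0 <= K * U) by nra.
    assert (K * U * (D * a) <= K * U * (D * q)) by (apply Rmult_le_compat_l; nra).
    assert (K * U * (D * (D * (a * p))) <= K * U * (K * (D * q))).
    { apply Rmult_le_compat_l; [auto|].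
      apply Rmult_le_compat; [lra | apply Rmult_le_pos; nra | lra |].
      apply Rmult_le_compat_l; lra. }
    assert (K * V * (D * (a * p)) <= K * V * (D * q)) by (apply Rmult_le_compat_l; nra).
    nra.
Qed.

(* Rm itself is of order 1, not a, hence the weaker form 1 + D a^(-k) in the induction. *)
Lemma curv_bounds K k : 0 <= K ->
  exists U V, 0 <= U /\ 0 <= V /\
    forall x y z a D, berger_bounds K x y z a D ->
      tensor_bound (k + 4) (curv x y z k) (U * (1 + D * (/ a) ^ k)) /\
      tensor_bound (k + 4) (der_act (so3_gen 0) (curv x y z k)) (V * D * (/ a) ^ k).
Proof.
  intros hK; induction k as [|k (U & V & hU & hV & IH)].
  - exists (30 * K), (20 * K); split; [lra|]; split; [lra|].
    intros x y z a D [_ [hD _] _ _ _ _ hS0 hS1]; simpl pow; split;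
      intros l Hl; destruct l as [|a0 [|b [|p [|q [|r l]]]]]; try discriminate.
    + pose proof (Rabs_curv0_le a0 b p q x y z); cbn [curv]; nra.
    + pose proof (Rabs_rot_curv0_le a0 b p q x y z); nra.
  - set (N := 3 * INR (k + 4)).
    assert (hN : 0 <= N) by (unfold N; pose proof (pos_INR (k + 4)); lra).
    exists (K * (V + N * U)), (N * K * (2 * V + U + K * U)).
    split; [apply Rmult_le_pos; nra|]; split; [apply Rmult_le_pos; nra|].
    intros x y z a D Hb; destruct (IH x y z a D Hb) as [HF HF0].
    destruct (bb_a _ _ _ _ _ _ Hb) as [ha ha1]; destruct (bb_D _ _ _ _ _ _ Hb) as [hD _].
    assert (hp : 1 <= (/ a) ^ k)
      by (apply pow_R1_Rle, Rinv_ge_1; lra).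
    destruct (curv_bounds_step K x y z a D k U V ((/ a) ^ k) Hb hU hV hp HF HF0) as [HS HS0].
    replace ((/ a) ^ k / a) with ((/ a) ^ S k) in HS, HS0 by (simpl; unfold Rdiv; ring).
    split; [|exact HS0].
    eapply tensor_bound_le; [exact HS|].
    apply Rmult_le_compat_l; [apply Rmult_le_pos; nra | lra].
Qed.

Lemma curv_bound_sharp K k : 0 <= K ->
  exists U, 0 <= U /\ forall x y z a D, berger_bounds K x y z a D ->
    tensor_bound (S k + 4) (curv x y z (S k)) (U * (a + D * (/ a) ^ S k)).
Proof.
  intros hK; destruct (curv_bounds K k hK) as (U & V & hU & hV & HB).
  exists (K * (V + 3 * INR (k + 4) * U)).
  split; [pose proof (pos_INR (k + 4)); apply Rmult_le_pos; nra|]; intros x y z a D Hb.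
  destruct (HB x y z a D Hb) as [HF HF0].
  destruct (bb_a _ _ _ _ _ _ Hb) as [ha ha1].
  assert (hp : 1 <= (/ a) ^ k)
    by (apply pow_R1_Rle, Rinv_ge_1; lra).
  replace ((/ a) ^ S k) with ((/ a) ^ k / a) by (simpl; unfold Rdiv; ring).
  exact (proj1 (curv_bounds_step K x y z a D k U V _ Hb hU hV hp HF HF0)).
Qed.

Lemma berger_bounds_intro C x y z a D :
  0 < a <= 1 -> 0 <= D <= C ->
  0 <= x <= 4 / a -> 0 <= y <= 4 / a -> 0 <= z <= 4 * a ->
  Rabs (x - y) <= 4 * D * a -> x * z <= 4 -> y * z <= 4 ->
  berger_bounds (48 * (C + 1)) x y z a D.
Proof.
  intros [ha ha1] [hD hDC] hx hy hz hxy hxz hyz.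
  assert (ia1 : 1 <= / a) by (apply Rinv_ge_1; lra).
  unfold Rdiv in *.
  assert (hS : Rabs (x - y) * (x + y + z) <= 48 * D).
  { replace (48 * D) with (4 * D * a * (12 * / a)) by (field; lra).
    apply Rmult_le_compat; [apply Rabs_pos | lra | lra | nra]. }
  assert (hxy' : - (4 * D * a) <= x - y <= 4 * D * a).
  { pose proof (Rle_abs (x - y)); pose proof (Rle_abs (- (x - y))).
    rewrite Rabs_Ropp in *; lra. }
  constructor; unfold conn_coef, curv_size, asym_size, Rdiv;
    rewrite ?(Rabs_pos_eq x), ?(Rabs_pos_eq y), ?(Rabs_pos_eq z), ?(Rabs_pos_eq (x * z)),
      ?(Rabs_pos_eq (y * z)) by nra;
    try (apply Rabs_le; split); nra.
Qed.

Lemma berger_bounds_mu C eps l1 l2 :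
  0 < eps <= 1 -> 1 / 2 <= l1 <= 3 / 2 -> 1 / 2 <= l2 <= 3 / 2 ->
  0 <= C -> Rabs (l1 - l2) <= C * eps ->
  berger_bounds (48 * (C + 1)) (mu_x eps l1 l2) (mu_y eps l1 l2) (mu_z eps l1 l2)
    (sqrt eps) (Rabs (l1 - l2) / eps).
Proof.
  intros he h1 h2 hC hd.
  set (a := sqrt eps); set (b := sqrt l1); set (c := sqrt l2).
  assert (aa : a * a = eps) by (apply sqrt_sqrt; lra).
  assert (bb : b * b = l1) by (apply sqrt_sqrt; lra).
  assert (cc : c * c = l2) by (apply sqrt_sqrt; lra).
  assert (ha : 0 < a) by (apply sqrt_lt_R0; lra).
  assert (hb : 0 < b) by (apply sqrt_lt_R0; lra).
  assert (hc : 0 < c) by (apply sqrt_lt_R0; lra).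
  assert (hb2 : 1 / 2 <= b <= 2)
    by (split; [destruct (Rle_lt_dec b (1 / 2)) | destruct (Rle_lt_dec b 2)]; nra).
  assert (hc2 : 1 / 2 <= c <= 2)
    by (split; [destruct (Rle_lt_dec c (1 / 2)) | destruct (Rle_lt_dec c 2)]; nra).
  assert (hib : / b <= 2) by (apply (Rmult_le_reg_l b); [lra|]; rewrite Rinv_r by lra; lra).
  assert (hic : / c <= 2) by (apply (Rmult_le_reg_l c); [lra|]; rewrite Rinv_r by lra; lra).
  pose proof (Rinv_0_lt_compat _ ha); pose proof (Rinv_0_lt_compat _ hb);
    pose proof (Rinv_0_lt_compat _ hc).
  assert (ex : mu_x eps l1 l2 = c * / a * / b) by (unfold mu_x; fold a b c; field; lra).
  assert (ey : mu_y eps l1 l2 = b * / a * / c) by (unfold mu_y; fold a b c; field; lra).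
  assert (ez : mu_z eps l1 l2 = a * / b * / c) by (unfold mu_z; fold a b c; field; lra).
  rewrite ex, ey, ez.
  apply berger_bounds_intro; unfold Rdiv.
  - split; [lra|]. rewrite <- sqrt_1; apply sqrt_le_1_alt; lra.
  - split; [apply Rmult_le_pos; [apply Rabs_pos | apply Rlt_le, Rinv_0_lt_compat; lra]|].
    apply (Rmult_le_reg_r eps); [lra|]; rewrite Rmult_assoc, Rinv_l by lra; lra.
  - split; [repeat apply Rmult_le_pos; lra|].
    replace (c * / a * / b) with (/ a * (c * / b)) by ring.
    assert (c * / b <= 2 * 2) by (apply Rmult_le_compat; lra). nra.
  - split; [repeat apply Rmult_le_pos; lra|].
    replace (b * / a * / c) with (/ a * (b * / c)) by ring.
    assert (b * / c <= 2 * 2) by (apply Rmult_le_compat; lra). nra.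
  - split; [repeat apply Rmult_le_pos; lra|].
    replace (a * / b * / c) with (a * (/ b * / c)) by ring.
    assert (/ b * / c <= 2 * 2) by (apply Rmult_le_compat; lra). nra.
  - replace (c * / a * / b - b * / a * / c) with ((c * c - b * b) * (/ a * / b * / c))
      by (field; lra).
    rewrite Rabs_mult, (Rabs_pos_eq (/ a * / b * / c)) by (repeat apply Rmult_le_pos; lra).
    rewrite cc, bb, Rabs_minus_sym.
    replace (4 * (Rabs (l1 - l2) * / eps) * a) with (Rabs (l1 - l2) * / a * (2 * 2))
      by (rewrite <- aa; field; lra).
    replace (Rabs (l1 - l2) * (/ a * / b * / c)) with (Rabs (l1 - l2) * / a * (/ b * / c))
      by ring.
    apply Rmult_le_compat_l; [pose proof (Rabs_pos (l1 - l2)); nra|].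
    apply Rmult_le_compat; lra.
  - replace (c * / a * / b * (a * / b * / c)) with (/ b * / b) by (field; lra); nra.
  - replace (b * / a * / c * (a * / b * / c)) with (/ c * / c) by (field; lra); nra.
Qed.

Lemma length_in_idx_lists k ws : In ws (idx_lists k) -> length ws = k.
Proof.
  revert ws; induction k as [|k IH]; intros ws H; simpl in H.
  - destruct H as [<-|[]]; reflexivity.
  - apply in_flat_map in H; destruct H as [ws0 [H0 H1]].
    destruct H1 as [<-|[<-|[<-|[]]]]; simpl; f_equal; auto.
Qed.

Lemma sumL_le l f M : (forall ws, In ws l -> f ws <= M) -> sumL l f <= INR (length l) * M.
Proof.
  induction l as [|w l IH]; intros H; [simpl; lra|].
  change (f w + sumL l f <= INR (S (length l)) * M); rewrite S_INR.
  assert (f w <= M) by (apply H; left; reflexivity).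
  assert (sumL l f <= INR (length l) * M) by (apply IH; intros; apply H; right; auto).
  lra.
Qed.

Lemma Rmk_norm_le eps l1 l2 k M : 0 <= M ->
  (forall ws a b p q, length ws = k -> Rabs (Rmk eps l1 l2 k ws a b p q) <= M) ->
  Rmk_norm eps l1 l2 k <= sqrt (27 * INR (length (idx_lists k))) * M.
Proof.
  intros hM H; unfold Rmk_norm.
  rewrite <- (sqrt_square M) by lra; rewrite <- sqrt_mult_alt
    by (apply Rmult_le_pos; [lra | apply pos_INR]).
  apply sqrt_le_1_alt.
  replace (27 * INR (length (idx_lists k)) * (M * M))
    with (INR (length (idx_lists k)) * (27 * (M * M))) by ring.
  apply sumL_le; intros ws Hws; apply length_in_idx_lists in Hws.
  assert (Hsq : forall a b p q, Rmk eps l1 l2 k ws a b p q ^ 2 <= M * M).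
  { intros a b p q; rewrite <- Rsqr_pow2; apply Rsqr_le_abs_1.
    rewrite (Rabs_pos_eq M) by lra; auto. }
  unfold sum_wedge, sum3; repeat
    match goal with |- context [Rmk eps l1 l2 k ws ?a ?b ?p ?q ^ 2] =>
      pose proof (Hsq a b p q); set (Rmk eps l1 l2 k ws a b p q ^ 2) in * end.
  lra.
Qed.

Lemma Rpower_neg_half e k : 0 < e -> Rpower e (- (INR k + 2) / 2) = (/ sqrt e) ^ (k + 2).
Proof.
  intros he; pose proof (sqrt_lt_R0 _ he).
  rewrite <- Rpower_pow by (apply Rinv_0_lt_compat; auto).
  unfold Rpower; f_equal.
  rewrite ln_Rinv, <- (sqrt_sqrt e) at 1 by lra.
  rewrite ln_mult, plus_INR by auto; simpl INR; field.
Qed.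

Lemma Rmk_norm_bound C k : 0 <= C -> (1 <= k)%nat ->
  exists L, 0 <= L /\ forall eps l1 l2,
    0 < eps <= 1 -> 1 / 2 <= l1 <= 3 / 2 -> 1 / 2 <= l2 <= 3 / 2 ->
    Rabs (l1 - l2) <= C * eps ->
    Rmk_norm eps l1 l2 k
    <= L * (sqrt eps + Rpower eps (- (INR k + 2) / 2) * Rabs (l1 - l2)).
Proof.
  intros hC Hk; destruct k as [|k]; [lia|].
  destruct (curv_bound_sharp (48 * (C + 1)) k ltac:(lra)) as [U [hU HU]].
  set (c := sqrt (27 * INR (length (idx_lists (S k))))).
  exists (c * U); split; [apply Rmult_le_pos; [apply sqrt_pos | auto]|].
  intros eps l1 l2 he h1 h2 hd.
  pose proof (sqrt_lt_R0 _ (proj1 he)) as hs.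
  assert (e : sqrt eps + Rabs (l1 - l2) / eps * (/ sqrt eps) ^ S k
              = sqrt eps + Rpower eps (- (INR (S k) + 2) / 2) * Rabs (l1 - l2)).
  { assert (ee : eps = sqrt eps * sqrt eps) by (rewrite sqrt_sqrt; lra).
    rewrite Rpower_neg_half, pow_add by lra; set (s := sqrt eps) in *.
    rewrite ee; simpl; field; lra. }
  rewrite <- e, Rmult_assoc; apply Rmk_norm_le.
  - apply Rmult_le_pos; [auto|].
    pose proof (Rabs_pos (l1 - l2)); pose proof (pow_lt _ (S k) (Rinv_0_lt_compat _ hs)).
    assert (0 <= Rabs (l1 - l2) / eps)
      by (apply Rmult_le_pos; [lra | apply Rlt_le, Rinv_0_lt_compat; lra]).
    nra.
  - intros ws a b p q Hws; rewrite Rmk_eq_curv by (exact Hws || lra).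
    apply (HU _ _ _ _ _ (berger_bounds_mu C eps l1 l2 he h1 h2 hC hd)).
    rewrite length_app; simpl; lia.
Qed.

Lemma dominated_of_eventually_dominated (f g : nat -> R) N L0 :
  (forall n, 0 < g n) -> 0 <= L0 -> (forall n, (N <= n)%nat -> f n <= L0 * g n) ->
  exists L, 0 < L /\ forall n, f n <= L * g n.
Proof.
  intros hg hL0 Hf.
  assert (Hmax : exists M, 0 <= M /\ forall n, (n < N)%nat -> f n / g n <= M).
  { clear Hf; induction N as [|N [M [hM IH]]].
    - exists 0; split; [lra | intros; lia].
    - exists (Rmax M (f N / g N)); split; [eapply Rle_trans; [apply hM | apply Rmax_l]|].
      intros n Hn; destruct (Nat.eq_dec n N) as [->|Hne]; [apply Rmax_r|].
      eapply Rle_trans; [apply IH; lia | apply Rmax_l]. }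
  destruct Hmax as [M [hM HM]].
  exists (L0 + M + 1); split; [lra|]; intros n; pose proof (hg n).
  destruct (le_lt_dec N n) as [hn|hn].
  - pose proof (Hf n hn); nra.
  - assert (f n <= M * g n).
    { pose proof (Rmult_le_compat_r (g n) _ _ (Rlt_le _ _ (hg n)) (HM n hn)) as hM'.
      unfold Rdiv in hM'; rewrite Rmult_assoc, Rinv_l, Rmult_1_r in hM' by lra; auto. }
    nra.
Qed.

Lemma almost_Berger_eventually eps l1 l2 : almost_Berger eps l1 l2 ->
  exists N, forall n, (N <= n)%nat ->
    eps n <= 1 /\ 1 / 2 <= l1 n <= 3 / 2 /\ 1 / 2 <= l2 n <= 3 / 2.
Proof.
  intros [Hpos [He [H1 [H2 _]]]].
  destruct (He 1 ltac:(lra)) as [Na HNa].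
  destruct (H1 (1 / 2) ltac:(lra)) as [Nb HNb].
  destruct (H2 (1 / 2) ltac:(lra)) as [Nc HNc].
  exists (Na + Nb + Nc)%nat; intros n Hn.
  specialize (HNa n ltac:(lia)); specialize (HNb n ltac:(lia)); specialize (HNc n ltac:(lia)).
  unfold R_dist in *; rewrite Rminus_0_r in HNa.
  apply Rabs_def2 in HNa; apply Rabs_def2 in HNb; apply Rabs_def2 in HNc; lra.
Qed.

Theorem proposition4p4 (eps l1 l2 : nat -> R) :
  almost_Berger eps l1 l2 ->
  reg_ge eps l1 l2 2%Z ->
  forall k : nat, (1 <= k)%nat ->
  exists L : R, 0 < L /\
    forall n : nat,
      Rmk_norm (eps n) (l1 n) (l2 n) k
      <= L * (sqrt (eps n)
              + Rpower (eps n) (- (INR k + 2) / 2) * Rabs (l1 n - l2 n)).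
Proof.
  (* The estimate holds for every almost-Berger sequence: the regularity index is not used. *)
  intros HB _ k Hk.
  destruct (almost_Berger_eventually _ _ _ HB) as [N HN].
  destruct HB as [Hpos [_ [_ [_ [C [HC HCb]]]]]].
  destruct (Rmk_norm_bound C k (Rlt_le _ _ HC) Hk) as [L0 [hL0 HL0]].
  eapply dominated_of_eventually_dominated with (N := N); [| exact hL0 |].
  - intros n; destruct (Hpos n) as [he _].
    pose proof (sqrt_lt_R0 _ he); pose proof (Rabs_pos (l1 n - l2 n)).
    pose proof (exp_pos (- (INR k + 2) / 2 * ln (eps n))); unfold Rpower; nra.
  - intros n Hn; destruct (Hpos n) as (he & _ & _); destruct (HN n Hn) as (he1 & h1 & h2).
    apply HL0; auto.
Qed.
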